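(* A PFSA is irreducible if and only if it has no two distinct equivalent states. Furthermore, if two irreducible PFSA $G_1=(\Sigma,Q_1,\delta_1,\tilde\pi_1)$ and $G_2=(\Sigma,Q_2,\delta_2,\tilde\pi_2)$ generate the same stochastic process, then there is a bijection $f:Q_1\to Q_2$ such that $f(\delta_1(q,\sigma))=\delta_2(f(q),\sigma)$ and $\tilde\pi_2(f(q))=\tilde\pi_1(q)$ for all $q\in Q_1$, $\sigma\in\Sigma$.
   Context: A PFSA $G=(\Sigma,Q,\delta,\tilde\pi)$ consists of a finite alphabet $\Sigma$, a finite state set $Q$, observation probabilities $\tilde\pi(q,\cdot)$ (a probability distribution on $\Sigma$ for each $q$), and a partial transition map $\delta:Q\times\Sigma\to Q$ defined exactly where $\tilde\pi(q,\sigma)>0$; its graph (edges $q\to\delta(q,\sigma)$) is assumed strongly connected. It generates a process by emitting $\sigma$ with probability $\tilde\pi(q,\sigma)$ from current state $q$ and moving to $\delta(q,\sigma)$, the initial state drawn from the stationary distribution of the transition matrix $\pi(q,q')=\sum_{\sigma:\delta(q,\sigma)=q'}\tilde\pi(q,\sigma)$. $G$ is irreducible if no PFSA with strictly fewer states generates the same process. For a state $q$, $\mu_q$ is the probability measure on $\Sigma^\omega$ with $\mu_q(x\Sigma^\omega)=\tilde\pi(q,x)$, where for $x=\sigma_1\cdots\sigma_n$, $\tilde\pi(q,x)=\prod_{i=1}^n\tilde\pi(q_{i-1},\sigma_i)$ with $q_0=q$, $q_i=\delta(q_{i-1},\sigma_i)$ (and $0$ if some transition is undefined), i.e. the probability of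 emitting $x$ starting from $q$. Two states $q,q'$ are equivalent iff $\mu_q=\mu_{q'}$. *)

From HB Require Import structures.
From mathcomp Require Import all_boot all_order all_algebra.
From mathcomp Require Import reals.
Set Implicit Arguments. Unset Strict Implicit. Unset Printing Implicit Defensive.
Import Order.TTheory GRing.Theory Num.Theory.
Local Open Scope ring_scope.

Record pfsa (R : realType) (S Q : finType) := Pfsa {
  tpi : Q -> S -> R;
  delta : Q -> S -> option Q;
  tpi_ge0 : forall q s, 0 <= tpi q s;
  tpi_sum1 : forall q, \sum_(s : S) tpi q s = 1;
  delta_def : forall q s, (delta q s != None) = (0 < tpi q s);
  strongly_connected : forall q q' : Q,
    connect (fun a b => [exists s, delta a s == Some b]) q q'
}.

Section Defs.
Variables (R : realType) (S : finType).

Fixpoint tpiw (Q : finType) (G : pfsa R S Q) (q : Q) (x : seq S) : R :=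
  match x with
  | [::] => 1
  | s :: x' => match delta G q s with
               | Some q' => tpi G q s * tpiw G q' x'
               | None => 0
               end
  end.

Definition trans (Q : finType) (G : pfsa R S Q) (q q' : Q) : R :=
  \sum_(s : S | delta G q s == Some q') tpi G q s.

Definition stationary (Q : finType) (G : pfsa R S Q) (p : Q -> R) : Prop :=
  (forall q, 0 <= p q) /\ \sum_(q : Q) p q = 1 /\
  (forall q', \sum_(q : Q) p q * trans G q q' = p q').

(* probability of the cylinder x Sigma^omega under the process started
   from the initial distribution p *)
Definition word_prob (Q : finType) (G : pfsa R S Q) (p : Q -> R) (x : seq S) : R :=
  \sum_(q : Q) p q * tpiw G q x.

(* G1 and G2 generate the same stochastic process (initial states drawn
   from the stationary distributions; equality of all cylinder probabilities) *)
Definition same_process (Q1 Q2 : finType) (G1 : pfsa R S Q1) (G2 : pfsa R S Q2) : Prop :=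
  exists (p1 : Q1 -> R) (p2 : Q2 -> R),
    [/\ stationary G1 p1, stationary G2 p2 &
        forall x : seq S, word_prob G1 p1 x = word_prob G2 p2 x].

Definition irreducible (Q : finType) (G : pfsa R S Q) : Prop :=
  ~ exists (Q' : finType) (H : pfsa R S Q'), (#|Q'| < #|Q|)%N /\ same_process G H.

(* mu_q = mu_q' : equality of the measures on all cylinders *)
Definition equiv_states (Q : finType) (G : pfsa R S Q) (q q' : Q) : Prop :=
  forall x : seq S, tpiw G q x = tpiw G q' x.

End Defs.

(* Call states of two PFSAs equivalent when they induce the same measure.  The heart of
   the proof is that two PFSAs generating the same process have a pair of equivalent
   states.  For inequivalent states the Bhattacharyya coefficient of their length-N
   futures is < 1 once N is large, so [spread x], which sums sqrt (mass x r * mass x r')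
   over the inequivalent pairs of states reached after emitting x, decays geometrically
   on average over x.  Hence after some word x both automata have almost all their mass
   in a single equivalence class, and the futures of these two classes agree up to any
   eps.  Equivalence propagates along transitions, so by strong connectivity every state
   of the first automaton has an equivalent state in the second.  Without distinct
   equivalent states this correspondence is injective, which gives both the minimality
   and the isomorphism; conversely, merging equivalent states yields a smaller PFSA
   generating the same process. *)

From mathcomp Require Import all_boot all_order all_algebra.
From mathcomp Require Import reals boolp ring lra.
Set Implicit Arguments. Unset Strict Implicit. Unset Printing Implicit Defensive.
Import Order.TTheory GRing.Theory Num.Theory.
Local Open Scope ring_scope.

Section Words.
Variable S : finType.

Fixpoint words n : seq (seq S) :=
  if n is n'.+1 then [seq s :: w | s <- enum S, w <- words n'] else [:: [::]].

Lemma mem_words n w : (w \in words n) = (size w == n).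
Proof.
elim: n w => [|n IHn] [|s w] //=.
- by apply/allpairsP => -[[s' w'] [_ _]].
- rewrite eqSS -IHn; apply/allpairsP/idP => [[[s' w'] /= [_ + [_ ->]]] //|w_n].
  by exists (s, w); rewrite mem_enum.
Qed.

Variables (R : Type) (idx : R) (op : Monoid.com_law idx).

Lemma big_words_cons n (F : seq S -> R) :
  \big[op/idx]_(w <- words n.+1) F w = \big[op/idx]_(s : S) \big[op/idx]_(w <- words n) F (s :: w).
Proof. by rewrite big_allpairs_dep big_enum. Qed.

Lemma big_words_cat n m (F : seq S -> R) :
  \big[op/idx]_(w <- words (n + m)) F w =
  \big[op/idx]_(x <- words n) \big[op/idx]_(w <- words m) F (x ++ w).
Proof.
elim: n F => [|n IHn] F; first by rewrite big_seq1.
by rewrite addSn !big_words_cons; apply: eq_bigr => s _; rewrite IHn.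
Qed.

End Words.

Section OrderedSums.
Variable R : realDomainType.

Lemma ltr_sum_exists (I : eqType) (r : seq I) (F G : I -> R) :
  \sum_(i <- r) F i < \sum_(i <- r) G i -> exists2 i, i \in r & F i < G i.
Proof.
move=> ltFG; apply: contrapT => /forall2NP noi; move: ltFG; apply/negP; rewrite -leNgt.
rewrite big_seq_cond [leRHS]big_seq_cond; apply: ler_sum => i /andP[ir _].
by case: (noi i) => [/negP//|/negP]; rewrite -leNgt.
Qed.

Lemma ltr_sum_le_lt (I : eqType) (r : seq I) (F G : I -> R) i0 :
  (forall i, i \in r -> F i <= G i) -> i0 \in r -> F i0 < G i0 ->
  \sum_(i <- r) F i < \sum_(i <- r) G i.
Proof.
move=> leFG ri0 ltFG; rewrite (big_rem i0) // [ltRHS](big_rem i0) //=.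
rewrite ltr_leD // big_seq [leRHS]big_seq; apply: ler_sum => i /mem_rem; exact: leFG.
Qed.

Lemma exists_eq_of_close (I J : finType) (T : Type) (F : I -> T -> R) (G : J -> T -> R) :
  (forall eps, 0 < eps -> exists i j, forall t, `|F i t - G j t| < eps) ->
  exists i j, forall t, F i t = G j t.
Proof.
move=> close; apply: contrapT => /forallNP no_eq.
have witness (ij : I * J) : exists t, F ij.1 t != G ij.2 t.
  case: ij => i j; have /existsNP[t /eqP] : ~ forall t, F i t = G j t.
    by move=> eqFG; apply: (no_eq i); exists j.
  by exists t.
have [t_of neqFG] := choice witness.
pose gap ij := `|F ij.1 (t_of ij) - G ij.2 (t_of ij)|.
have gap_gt0 : 0 < \big[Num.min/1]_ij gap ij.
  by apply: lt_bigmin => // ij _; rewrite normr_gt0 subr_eq0.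
have [i [j close_ij]] := close _ gap_gt0.
by have := close_ij (t_of (i, j)); rewrite ltNge (bigmin_le _ (i, j)).
Qed.

End OrderedSums.

Section Sqrt.
Variable R : rcfType.
Implicit Types a b : R.

Lemma sqrtrD_le a b : 0 <= a -> 0 <= b -> Num.sqrt (a + b) <= Num.sqrt a + Num.sqrt b.
Proof.
move=> a_ge0 b_ge0; have sqrt_ge0 := addr_ge0 (sqrtr_ge0 a) (sqrtr_ge0 b).
rewrite -(ger0_norm sqrt_ge0) -sqrtr_sqr ler_sqrt ?sqr_ge0 // sqrrD !sqr_sqrtr //.
by rewrite -addrA lerD2l lerDr mulrn_wge0 // mulr_ge0 // sqrtr_ge0.
Qed.

Lemma sqrtr_sum_le (I : Type) (r : seq I) (P : pred I) (F : I -> R) :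
  (forall i, P i -> 0 <= F i) ->
  Num.sqrt (\sum_(i <- r | P i) F i) <= \sum_(i <- r | P i) Num.sqrt (F i).
Proof.
move=> F_ge0; elim: r => [|i r IHr]; first by rewrite !big_nil sqrtr0.
rewrite !big_cons; case: ifP => // Pi.
apply: le_trans (sqrtrD_le (F_ge0 i Pi) (sumr_ge0 _ F_ge0)) _.
by rewrite lerD2l.
Qed.

Lemma sqrtrM_AGM a b : 0 <= a -> 0 <= b ->
  Num.sqrt (a * b) <= (a + b) / 2 ?= iff (a == b).
Proof.
move=> a_ge0 b_ge0; have ab_ge0 : 0 <= (a + b) / 2 by rewrite divr_ge0 ?addr_ge0.
rewrite -[X in _ <= X ?= iff _](ger0_norm ab_ge0) -sqrtr_sqr.
rewrite (mono_in_leif (A := Num.nneg)); first exact: leif_AGM2.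
- by move=> x y _ y_ge0; rewrite ler_sqrt.
- by rewrite nnegrE mulr_ge0.
- by rewrite nnegrE sqr_ge0.
Qed.

Lemma sqrtr_sumM_le (I J : Type) (r : seq I) (r' : seq J) (P : pred I) (P' : pred J)
    (F : I -> R) (G : J -> R) :
  (forall i, P i -> 0 <= F i) -> (forall j, P' j -> 0 <= G j) ->
  Num.sqrt ((\sum_(i <- r | P i) F i) * \sum_(j <- r' | P' j) G j) <=
  \sum_(i <- r | P i) \sum_(j <- r' | P' j) Num.sqrt (F i) * Num.sqrt (G j).
Proof.
move=> F_ge0 G_ge0; rewrite sqrtrM ?sumr_ge0 //.
apply: le_trans (ler_pM _ _ (sqrtr_sum_le r F_ge0) (sqrtr_sum_le r' G_ge0)) _;
  rewrite ?sqrtr_ge0 // mulr_suml.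
by apply: ler_sum => i _; rewrite mulr_sumr.
Qed.

End Sqrt.

Lemma sum_fiber_Some (V : nmodType) (I J : finType) (f : I -> option J) (P : pred J)
    (F : I -> V) :
  \sum_(j | P j) \sum_(i | f i == Some j) F i = \sum_(i | oapp P false (f i)) F i.
Proof.
rewrite (exchange_big_dep (fun i => oapp P false (f i))) => [|j i Pj /eqP -> //].
apply: eq_bigr => i; case: (f i) => //= j Pj.
by rewrite (big_pred1 j) // => j'; rewrite (inj_eq Some_inj) eq_sym andb_idl // => /eqP ->.
Qed.

Section Archimedean.
Variable R : archiRealFieldType.

Lemma ler_bernoulli (d : R) n : 0 <= d -> 1 + n%:R * d <= (1 + d) ^+ n.
Proof.
move=> d_ge0; elim: n => [|n IHn]; first by rewrite mul0r addr0 expr0.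
rewrite exprSr; apply: le_trans (ler_wpM2r _ IHn); last by lra.
rewrite -natr1; have := mulr_ge0 (ler0n R n) (mulr_ge0 d_ge0 d_ge0); nra.
Qed.

Lemma exists_expr_lt (c eps : R) : 0 <= c -> c < 1 -> 0 < eps -> exists k, c ^+ k < eps.
Proof.
move=> c_ge0 c_lt1 eps_gt0; have [->|c_neq0] := eqVneq c 0; first by exists 1%N; rewrite expr1.
have c_gt0 : 0 < c by rewrite lt_neqAle eq_sym c_neq0.
pose d := c^-1 - 1; have d_gt0 : 0 < d by rewrite subr_gt0 invf_gt1.
have c_def : c = (1 + d)^-1 by rewrite addrC subrK invrK.
have eps_d_gt0 : 0 < (eps * d)^-1 by rewrite invr_gt0 mulr_gt0.
have /archi_boundP := ltW eps_d_gt0; set k := Num.bound _ => k_gt.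
have pow_gt0 : 0 < (1 + d) ^+ k by rewrite exprn_gt0 // addr_gt0.
exists k; rewrite c_def exprVn invf_plt ?posrE //.
have k_d_gt : eps^-1 < k%:R * d by rewrite -ltr_pdivrMr // -invfM.
apply: (lt_le_trans _ (ler_bernoulli k (ltW d_gt0))); lra.
Qed.

End Archimedean.

Section PFSA.
Variables (R : realType) (S : finType).

Definition eq_mu (Q1 Q2 : finType) (G1 : pfsa R S Q1) (G2 : pfsa R S Q2) (q1 : Q1) (q2 : Q2) :=
  forall w, tpiw G1 q1 w = tpiw G2 q2 w.

Section OnePFSA.
Variables (Q : finType) (G : pfsa R S Q).
Implicit Types (q r : Q) (s : S) (x w : seq S).

Lemma tpi_le1 q s : tpi G q s <= 1.
Proof.
rewrite -(tpi_sum1 G q) (bigD1 s) //= lerDl sumr_ge0 // => s' _; exact: tpi_ge0.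
Qed.

Lemma tpi_eq0 q s : delta G q s = None -> tpi G q s = 0.
Proof.
move=> delta_None; apply/eqP; rewrite eq_le tpi_ge0 andbT leNgt -delta_def.
by rewrite delta_None.
Qed.

Lemma tpi_gt0 q s r : delta G q s = Some r -> 0 < tpi G q s.
Proof. by move=> delta_qs; rewrite -delta_def delta_qs. Qed.

Lemma tpiw_seq1 q s : tpiw G q [:: s] = tpi G q s.
Proof.
rewrite /=; case E: (delta G q s) => [r|]; first exact: mulr1.
by rewrite tpi_eq0.
Qed.

Lemma tpiw_ge0 q x : 0 <= tpiw G q x.
Proof.
elim: x q => [|s x IHx] q /=; first exact: ler01.
by case: (delta G q s) => // r; rewrite mulr_ge0 ?tpi_ge0.
Qed.

Lemma tpiw_le1 q x : tpiw G q x <= 1.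
Proof.
elim: x q => [|s x IHx] q /=; first exact: lexx.
case: (delta G q s) => [r|]; last exact: ler01.
by rewrite -[1]mulr1 ler_pM ?tpi_ge0 ?tpiw_ge0 ?tpi_le1.
Qed.

Fixpoint deltaw q x : option Q :=
  if x is s :: x' then obind (deltaw ^~ x') (delta G q s) else Some q.

Lemma deltaw_cat q x w : deltaw q (x ++ w) = obind (deltaw ^~ w) (deltaw q x).
Proof. by elim: x q => [|s x IHx] q //=; case: (delta G q s). Qed.

Lemma tpiw_cat q x w : tpiw G q (x ++ w) = tpiw G q x * oapp (tpiw G ^~ w) 0 (deltaw q x).
Proof.
elim: x q => [|s x IHx] q /=; first by rewrite mul1r.
by case: (delta G q s) => [r|] /=; rewrite ?mul0r // IHx mulrA.
Qed.

Lemma deltaw_None q x : deltaw q x = None -> tpiw G q x = 0.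
Proof. by move=> deltaw_qx; rewrite -[x]cats0 tpiw_cat deltaw_qx mulr0. Qed.

Lemma sum_tpiw n q : \sum_(w <- words S n) tpiw G q w = 1.
Proof.
elim: n q => [|n IHn] q; first by rewrite big_seq1.
rewrite big_words_cons -(tpi_sum1 G q); apply: eq_bigr => s _ /=.
case E: (delta G q s) => [r|]; last by rewrite tpi_eq0 // big1.
by rewrite -mulr_sumr IHn mulr1.
Qed.

Lemma sum_tpiw_rcons q w : \sum_s tpiw G q (rcons w s) = tpiw G q w.
Proof.
under eq_bigr do rewrite -cats1 tpiw_cat.
rewrite -mulr_sumr; case E: (deltaw q w) => [r|]; last by rewrite deltaw_None ?mul0r.
rewrite -[RHS]mulr1 -(tpi_sum1 G r); congr (_ * _).
by apply: eq_bigr => s _; exact: tpiw_seq1.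
Qed.

Lemma sum_tpiw_midpoint n q q' :
  \sum_(w <- words S n) (tpiw G q w + tpiw G q' w) / 2 = 1.
Proof. by rewrite -mulr_suml big_split /= !sum_tpiw divff // (pnatr_eq0 _ 2).
Qed.

Lemma exists_neq_tpiw_size q q' w0 N : tpiw G q w0 != tpiw G q' w0 -> (size w0 <= N)%N ->
  exists2 w, size w = N & tpiw G q w != tpiw G q' w.
Proof.
move=> neq_w0 /subnKC <-; elim: (N - size w0)%N => [|k [w size_w neq_w]].
  by exists w0; rewrite ?addn0.
have [s neq_ws] : exists s, tpiw G q (rcons w s) != tpiw G q' (rcons w s).
  apply: contrapT => /forallNP eq_ws; move/eqP: neq_w; apply.
  rewrite -!sum_tpiw_rcons; apply: eq_bigr => s _.
  by apply/eqP/negPn/negP; exact: eq_ws.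
by exists (rcons w s); rewrite // size_rcons size_w addnS.
Qed.

End OnePFSA.

Section TwoPFSA.
Variables (Q1 Q2 : finType) (G1 : pfsa R S Q1) (G2 : pfsa R S Q2).

Lemma eq_mu_sym q1 q2 : eq_mu G1 G2 q1 q2 -> eq_mu G2 G1 q2 q1.
Proof. by move=> eq12 w; rewrite eq12. Qed.

Lemma eq_mu_tpi q1 q2 s : eq_mu G1 G2 q1 q2 -> tpi G2 q2 s = tpi G1 q1 s.
Proof. by move=> eq12; rewrite -!tpiw_seq1 eq12. Qed.

Lemma eq_mu_delta_None q1 q2 s :
  eq_mu G1 G2 q1 q2 -> delta G1 q1 s = None -> delta G2 q2 s = None.
Proof.
move=> eq12 /tpi_eq0; rewrite -(eq_mu_tpi s eq12) => tpi0.
by apply/eqP; rewrite -[_ == None]negbK delta_def tpi0 ltxx.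
Qed.

Lemma eq_mu_delta q1 q2 s r1 : eq_mu G1 G2 q1 q2 -> delta G1 q1 s = Some r1 ->
  exists2 r2, delta G2 q2 s = Some r2 & eq_mu G1 G2 r1 r2.
Proof.
move=> eq12 delta1; have tpi1_gt0 := tpi_gt0 delta1.
case delta2: (delta G2 q2 s) => [r2|]; last first.
  by move: tpi1_gt0; rewrite -(eq_mu_tpi s eq12) tpi_eq0 ?ltxx.
exists r2 => // w; have := eq12 (s :: w); rewrite /= delta1 delta2 (eq_mu_tpi s eq12).
by apply: mulfI; rewrite gt_eqF.
Qed.

Lemma eq_mu_deltaw q1 q2 w r1 r2 : eq_mu G1 G2 q1 q2 -> 0 < tpiw G1 q1 w ->
  deltaw G1 q1 w = Some r1 -> deltaw G2 q2 w = Some r2 -> eq_mu G1 G2 r1 r2.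
Proof.
move=> eq12 tpiw_gt0 deltaw1 deltaw2 x.
have := eq12 (w ++ x); rewrite !tpiw_cat deltaw1 deltaw2 -(eq12 w) /=.
by apply: mulfI; rewrite gt_eqF.
Qed.

End TwoPFSA.

Lemma eq_mu_trans (Q1 Q2 Q3 : finType) (G1 : pfsa R S Q1) (G2 : pfsa R S Q2)
    (G3 : pfsa R S Q3) q1 q2 q3 :
  eq_mu G1 G2 q1 q2 -> eq_mu G2 G3 q2 q3 -> eq_mu G1 G3 q1 q3.
Proof. by move=> eq12 eq23 w; rewrite eq12 eq23. Qed.

End PFSA.

Section Spread.
Variables (R : realType) (S Q : finType) (G : pfsa R S Q) (p : Q -> R).
Hypothesis p_ge0 : forall q, 0 <= p q.
Implicit Types (q r : Q) (x w : seq S).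

Definition mass x r := \sum_(q | deltaw G q x == Some r) p q * tpiw G q x.

Definition inequiv q q' := ~~ `[< eq_mu G G q q' >].

(* Vanishes iff the states reachable by x with positive probability are pairwise
   equivalent. *)
Definition spread x := \sum_r \sum_(r' | inequiv r r') Num.sqrt (mass x r * mass x r').

Definition bhatt n q q' := \sum_(w <- words S n) Num.sqrt (tpiw G q w * tpiw G q' w).

Lemma mass_ge0 x r : 0 <= mass x r.
Proof. by apply: sumr_ge0 => q _; rewrite mulr_ge0 ?tpiw_ge0. Qed.

Lemma spread_ge0 x : 0 <= spread x.
Proof. by do 2!apply: sumr_ge0 => ? _; exact: sqrtr_ge0. Qed.

Lemma sum_mass x (F : Q -> R) :
  \sum_r mass x r * F r = \sum_q p q * tpiw G q x * oapp F 0 (deltaw G q x).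
Proof.
under eq_bigr do rewrite mulr_suml.
rewrite (exchange_big_dep xpredT) //=; apply: eq_bigr => q _.
case: (deltaw G q x) => [r|] /=; last by rewrite big_pred0 ?mulr0.
by rewrite (big_pred1 r) // => r'; rewrite (inj_eq Some_inj) eq_sym.
Qed.

Lemma word_prob_cat x w : word_prob G p (x ++ w) = \sum_r mass x r * tpiw G r w.
Proof.
rewrite sum_mass; apply: eq_bigr => q _.
by rewrite tpiw_cat mulrA.
Qed.

Lemma word_prob_mass x : word_prob G p x = \sum_r mass x r.
Proof.
by rewrite -[x]cats0 word_prob_cat; apply: eq_bigr => r _; rewrite cats0 mulr1.
Qed.

Lemma mass_cat x w r :
  mass (x ++ w) r = \sum_(q | deltaw G q w == Some r) mass x q * tpiw G q w.
Proof.
rewrite [RHS]big_mkcond (eq_bigr (fun q => mass x q *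
  (if deltaw G q w == Some r then tpiw G q w else 0))) => [|q _]; last by case: ifP; rewrite ?mulr0.
rewrite sum_mass /mass big_mkcond /=; apply: eq_bigr => q _.
rewrite tpiw_cat deltaw_cat; case: (deltaw G q x) => [r'|] /=; last by rewrite mulr0.
by case: ifP; rewrite ?mulr0 ?mulrA.
Qed.

Lemma sqrt_mass_cat_le x w r r' :
  Num.sqrt (mass (x ++ w) r * mass (x ++ w) r') <=
  \sum_(q | deltaw G q w == Some r) \sum_(q' | deltaw G q' w == Some r')
    Num.sqrt (mass x q * mass x q') * Num.sqrt (tpiw G q w * tpiw G q' w).
Proof.
rewrite !mass_cat; apply: le_trans (sqrtr_sumM_le _ _ _ _) _ => [q _|q _|].
- by rewrite mulr_ge0 ?mass_ge0 ?tpiw_ge0.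
- by rewrite mulr_ge0 ?mass_ge0 ?tpiw_ge0.
do 2!(apply: ler_sum => ? _).
by rewrite !sqrtrM ?mass_ge0 ?tpiw_ge0 // mulrACA.
Qed.

Lemma inequiv_deltaw q q' w r r' : 0 < tpiw G q w ->
  deltaw G q w = Some r -> deltaw G q' w = Some r' -> inequiv r r' -> inequiv q q'.
Proof.
move=> tpiw_gt0 deltaw_q deltaw_q'; apply: contra => /asboolP eq_qq'; apply/asboolP.
exact: eq_mu_deltaw eq_qq' tpiw_gt0 deltaw_q deltaw_q'.
Qed.

Lemma spread_cat_le x w : spread (x ++ w) <=
  \sum_q \sum_(q' | inequiv q q')
    Num.sqrt (mass x q * mass x q') * Num.sqrt (tpiw G q w * tpiw G q' w).
Proof.
pose H q q' := Num.sqrt (mass x q * mass x q') * Num.sqrt (tpiw G q w * tpiw G q' w).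
pose f q := deltaw G q w.
have H_ge0 q q' : 0 <= H q q' by rewrite mulr_ge0 ?sqrtr_ge0.
pose diverge q q' := oapp (fun r => oapp (inequiv r) false (f q')) false (f q).
apply: (@le_trans _ _ (\sum_r \sum_(r' | inequiv r r')
    \sum_(q | f q == Some r) \sum_(q' | f q' == Some r') H q q')).
  by do 2!(apply: ler_sum => ? _); exact: sqrt_mass_cat_le.
under eq_bigr do rewrite exchange_big /=.
rewrite (eq_bigr (fun r => \sum_(q | f q == Some r) \sum_(q' | diverge q q') H q q')); last first.
  move=> r _; apply: eq_bigr => q /eqP fq; rewrite sum_fiber_Some.
  by apply: eq_bigl => q'; rewrite /diverge fq.
rewrite (sum_fiber_Some f xpredT (fun q => \sum_(q' | diverge q q') H q q')).
apply: (@le_trans _ _ (\sum_q \sum_(q' | diverge q q') H q q')).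
  rewrite [leRHS](bigID (fun q => oapp xpredT false (f q))) /= lerDl.
  by do 2!apply: sumr_ge0 => ? _.
apply: ler_sum => q _; rewrite big_mkcond [leRHS]big_mkcond; apply: ler_sum => q' _ /=.
case not_ineq: (inequiv q q'); first by case: (diverge q q'); [exact: lexx | exact: H_ge0].
case: ifP => //; rewrite /diverge /f; case dq: (deltaw G q w) => [r|] //=.
case dq': (deltaw G q' w) => [r'|] //= ineq_rr'.
have [t0|t_neq0] := eqVneq (tpiw G q w) 0; first by rewrite /H t0 mul0r sqrtr0 mulr0.
have t_gt0 : 0 < tpiw G q w by rewrite lt_neqAle eq_sym t_neq0 tpiw_ge0.
by rewrite (inequiv_deltaw t_gt0 dq dq' ineq_rr') in not_ineq.
Qed.

Lemma sum_spread_cat_le N c x : (forall q q', inequiv q q' -> bhatt N q q' <= c) ->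
  \sum_(w <- words S N) spread (x ++ w) <= c * spread x.
Proof.
move=> bhatt_le; apply: le_trans (ler_sum _ (fun w _ => spread_cat_le x w)) _.
rewrite exchange_big /= mulr_sumr; apply: ler_sum => q _.
rewrite exchange_big /= mulr_sumr; apply: ler_sum => q' ineq.
by rewrite -mulr_sumr mulrC ler_wpM2r ?sqrtr_ge0 ?bhatt_le.
Qed.

Lemma bhatt_le1 N q q' : bhatt N q q' <= 1.
Proof.
rewrite -(sum_tpiw_midpoint G N q q'); apply: ler_sum => w _.
exact: (sqrtrM_AGM (tpiw_ge0 _ _ _) (tpiw_ge0 _ _ _)).1.
Qed.

Lemma bhatt_lt1 N q q' w0 :
  tpiw G q w0 != tpiw G q' w0 -> (size w0 <= N)%N -> bhatt N q q' < 1.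
Proof.
move=> neq_w0 size_w0; have [w size_w neq_w] := exists_neq_tpiw_size neq_w0 size_w0.
have w_words : w \in words S N by rewrite mem_words size_w.
rewrite -(sum_tpiw_midpoint G N q q'); apply: ltr_sum_le_lt w_words _ => [w' _|].
  exact: (sqrtrM_AGM (tpiw_ge0 _ _ _) (tpiw_ge0 _ _ _)).1.
by rewrite (lt_leif (sqrtrM_AGM (tpiw_ge0 _ _ _) (tpiw_ge0 _ _ _))) neq_w.
Qed.

Lemma bhatt_contract :
  exists N c, [/\ 0 <= c, c < 1 & forall q q', inequiv q q' -> bhatt N q q' <= c].
Proof.
have witness (qq : Q * Q) : exists w, inequiv qq.1 qq.2 -> tpiw G qq.1 w != tpiw G qq.2 w.
  case: qq => q q' /=; case ineq: (inequiv q q'); last by exists [::].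
  by move: ineq => /asboolPn /existsNP [w /eqP neq]; exists w.
have [w_of w_ofP] := choice witness.
pose N := (\max_(qq : Q * Q) size (w_of qq))%N.
exists N, (\big[Num.max/0]_(qq | inequiv qq.1 qq.2) bhatt N qq.1 qq.2); split.
- exact: bigmax_ge_id.
- apply: bigmax_lt => // qq ineq.
  exact: bhatt_lt1 (w_ofP qq ineq) (leq_bigmax qq).
- by move=> q q' ineq; exact: (le_bigmax_cond _ (P := fun qq => inequiv qq.1 qq.2) (j := (q, q'))).
Qed.

Lemma spread_words_vanish eps : 0 < eps ->
  exists n0, forall n, (n0 <= n)%N -> \sum_(x <- words S n) spread x < eps.
Proof.
move=> eps_gt0; have [N [c [c_ge0 c_lt1 bhatt_le]]] := bhatt_contract.
have spread_mono n m : \sum_(x <- words S (n + m)) spread x <= \sum_(x <- words S n) spread x.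
  rewrite big_words_cat; apply: ler_sum => x _; rewrite -[leRHS]mul1r.
  by apply: sum_spread_cat_le => q q' _; exact: bhatt_le1.
have spread_geo k : \sum_(x <- words S (k * N)) spread x <= c ^+ k * spread [::].
  elim: k => [|k IHk]; first by rewrite big_seq1 mul1r.
  rewrite mulSn addnC big_words_cat exprS -mulrA.
  apply: le_trans (ler_sum _ (fun x _ => sum_spread_cat_le x bhatt_le)) _.
  by rewrite -mulr_sumr ler_wpM2l.
have M_gt0 : 0 < spread [::] + 1 by rewrite ltr_wpDl ?spread_ge0.
have [k ck_lt] := exists_expr_lt c_ge0 c_lt1 (divr_gt0 eps_gt0 M_gt0).
exists (k * N)%N => n /subnKC <-; apply: le_lt_trans (spread_mono _ _) _.
apply: le_lt_trans (spread_geo k) _; rewrite ltr_pdivlMr // in ck_lt.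
by apply: le_lt_trans ck_lt; rewrite ler_wpM2l ?exprn_ge0 // lerDl.
Qed.

Lemma exists_dominant_state x eps : spread x < eps * word_prob G p x ->
  exists q, \sum_(r | inequiv q r) mass x r < eps * word_prob G p x.
Proof.
set P := word_prob G p x => spread_lt.
have P_ge0 : 0 <= P by rewrite /P word_prob_mass sumr_ge0 // => r _; exact: mass_ge0.
have P_gt0 : 0 < P.
  rewrite lt_neqAle P_ge0 andbT eq_sym; apply: contraTneq spread_lt => ->.
  by rewrite mulr0 -leNgt spread_ge0.
have mass_le r : mass x r <= P.
  by rewrite /P word_prob_mass (bigD1 r) //= lerDl sumr_ge0 // => r' _; exact: mass_ge0.
have sum_le : \sum_q mass x q * \sum_(r | inequiv q r) mass x r <= P * spread x.
  rewrite /spread mulr_sumr; apply: ler_sum => q _.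
  rewrite mulr_sumr mulr_sumr; apply: ler_sum => r _.
  have mass_qr_ge0 : 0 <= mass x q * mass x r by rewrite mulr_ge0 ?mass_ge0.
  rewrite -[leLHS]sqr_sqrtr // expr2 ler_wpM2r ?sqrtr_ge0 //.
  apply: le_trans (sqrtrM_AGM (mass_ge0 x q) (mass_ge0 x r)).1 _.
  by have := mass_le q; have := mass_le r; lra.
have [q _ lt_q] : exists2 q, q \in index_enum Q &
    mass x q * \sum_(r | inequiv q r) mass x r < mass x q * (eps * P).
  apply: ltr_sum_exists; apply: le_lt_trans sum_le _.
  by rewrite -mulr_suml -word_prob_mass -/P ltr_pM2l.
have mass_q_gt0 : 0 < mass x q.
  by rewrite lt_neqAle mass_ge0 andbT; apply: contraTneq lt_q => <-; rewrite !mul0r ltxx.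
by exists q; rewrite -(ltr_pM2l mass_q_gt0).
Qed.

Lemma word_prob_cat_near x q w :
  `|word_prob G p (x ++ w) - word_prob G p x * tpiw G q w| <= \sum_(r | inequiv q r) mass x r.
Proof.
rewrite word_prob_cat word_prob_mass mulr_suml -sumrB.
apply: le_trans (ler_norm_sum _ _ _) _; rewrite [leRHS]big_mkcond; apply: ler_sum => r _.
rewrite -mulrBr normrM ger0_norm ?mass_ge0 //; case: ifP => [_|/negbFE/asboolP eq_qr].
  rewrite ler_piMr ?mass_ge0 // ler_norml.
  by have := tpiw_ge0 G r w; have := tpiw_le1 G r w; have := tpiw_ge0 G q w; have := tpiw_le1 G q w; lra.
by rewrite (eq_qr w) subrr normr0 mulr0.
Qed.

Hypothesis p_sum1 : \sum_q p q = 1.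

Lemma sum_word_prob n : \sum_(x <- words S n) word_prob G p x = 1.
Proof.
rewrite exchange_big /= -p_sum1; apply: eq_bigr => q _.
by rewrite -mulr_sumr sum_tpiw mulr1.
Qed.

End Spread.

Section SameProcess.
Variables (R : realType) (S Q1 Q2 : finType) (G1 : pfsa R S Q1) (G2 : pfsa R S Q2).

Lemma eq_mu_propagate q0 h0 : eq_mu G1 G2 q0 h0 -> forall q, exists h, eq_mu G1 G2 q h.
Proof.
move=> eq0 q; have /connectP [qs qs_path ->] := strongly_connected G1 q0 q.
elim: qs q0 h0 eq0 qs_path => [|q1 qs IHqs] q0 h0 eq0 /=; first by exists h0.
case/andP => /existsP [s /eqP delta_q0] qs_path.
have [h1 _ eq1] := eq_mu_delta eq0 delta_q0.
exact: IHqs eq1 qs_path.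
Qed.

Variables (p1 : Q1 -> R) (p2 : Q2 -> R).
Hypotheses (p1_ge0 : forall q, 0 <= p1 q) (p2_ge0 : forall q, 0 <= p2 q).
Hypothesis p1_sum1 : \sum_q p1 q = 1.
Hypothesis same_prob : forall x, word_prob G1 p1 x = word_prob G2 p2 x.

Lemma exists_small_spreads eps : 0 < eps -> exists x,
  spread G1 p1 x < eps * word_prob G1 p1 x /\ spread G2 p2 x < eps * word_prob G2 p2 x.
Proof.
move=> eps_gt0; have eps2_gt0 : 0 < eps / 2 by rewrite divr_gt0.
have [n1 small1] := spread_words_vanish G1 p1_ge0 eps2_gt0.
have [n2 small2] := spread_words_vanish G2 p2_ge0 eps2_gt0.
have : \sum_(x <- words S (maxn n1 n2)) (spread G1 p1 x + spread G2 p2 x) <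
       \sum_(x <- words S (maxn n1 n2)) eps * word_prob G1 p1 x.
  rewrite -mulr_sumr sum_word_prob // mulr1 big_split /=.
  by have := small1 _ (leq_maxl n1 n2); have := small2 _ (leq_maxr n1 n2); lra.
case/ltr_sum_exists => x _ lt_x; exists x; rewrite -same_prob.
by have := spread_ge0 G1 p1 x; have := spread_ge0 G2 p2 x; lra.
Qed.

Lemma close_states eps : 0 < eps ->
  exists q h, forall w, `|tpiw G1 q w - tpiw G2 h w| < eps.
Proof.
move=> eps_gt0; have [x [small1 small2]] := exists_small_spreads (divr_gt0 eps_gt0 (ltr0n R 2)).
have [q dom_q] := exists_dominant_state p1_ge0 small1.
have [h dom_h] := exists_dominant_state p2_ge0 small2.
set P := word_prob G1 p1 x in small1 dom_q; rewrite -same_prob -/P in dom_h.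
have P_gt0 : 0 < P.
  by move: (le_lt_trans (spread_ge0 G1 p1 x) small1); rewrite pmulr_rgt0 // divr_gt0.
exists q, h => w; rewrite -(ltr_pM2l P_gt0).
have near_q := le_lt_trans (word_prob_cat_near G1 p1_ge0 x q w) dom_q.
have near_h := le_lt_trans (word_prob_cat_near G2 p2_ge0 x h w) dom_h.
rewrite -!same_prob -/P in near_h.
set a := word_prob G1 p1 (x ++ w) in near_q near_h.
have -> : P * `|tpiw G1 q w - tpiw G2 h w| = `|(a - P * tpiw G2 h w) - (a - P * tpiw G1 q w)|.
  by rewrite -[P in P * _](ger0_norm (ltW P_gt0)) -normrM; congr `|_|; ring.
by apply: le_lt_trans (ler_normB _ _) _; lra.
Qed.

Lemma eq_mu_total q : exists h, eq_mu G1 G2 q h.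
Proof.
have [q0 [h0 eq0]] := exists_eq_of_close close_states.
exact: eq_mu_propagate eq0 q.
Qed.

End SameProcess.

Lemma same_process_eq_mu (R : realType) (S Q1 Q2 : finType) (G1 : pfsa R S Q1)
    (G2 : pfsa R S Q2) :
  same_process G1 G2 -> exists f : Q1 -> Q2, forall q, eq_mu G1 G2 q (f q).
Proof.
case=> p1 [p2 [[p1_ge0 [p1_sum1 _]] [p2_ge0 _] same_prob]].
by have [f f_eq] := choice (eq_mu_total p1_ge0 p2_ge0 p1_sum1 same_prob); exists f.
Qed.

Section StochasticMatrix.
Variables (R : realFieldType) (n : nat) (A : 'M[R]_n).
Hypotheses (A_ge0 : forall i j, 0 <= A i j) (A_sum1 : forall i, \sum_j A i j = 1).

Lemma stochastic_mx_fixed_row : (0 < n)%N -> exists2 v : 'rV[R]_n, v != 0 & v *m A = v.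
Proof.
move=> n_gt0; pose c : 'cV[R]_n := const_mx 1.
have Ac : (A - 1%:M) *m c = 0.
  apply/matrixP => i k; rewrite mulmxBl mul1mx !mxE.
  by under eq_bigr do rewrite !mxE mulr1; rewrite A_sum1 subrr.
have /det0P [v v_neq0 vA] : \det (A - 1%:M) == 0.
  rewrite -det_tr; apply/det0P; exists c^T; last by rewrite -trmx_mul Ac trmx0.
  by apply/eqP => /matrixP /(_ 0 (Ordinal n_gt0)) /eqP; rewrite !mxE oner_eq0.
by exists v => //; apply/eqP; rewrite -subr_eq0 -{2}[v]mulmx1 -mulmxBr vA.
Qed.

Lemma stochastic_mx_fixed_norm (v : 'rV[R]_n) :
  v *m A = v -> map_mx Num.norm v *m A = map_mx Num.norm v.
Proof.
move=> vA; set u := map_mx Num.norm v.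
have u_le j : u 0 j <= (u *m A) 0 j.
  have -> : u 0 j = `|(v *m A) 0 j| by rewrite vA mxE.
  rewrite !mxE; apply: le_trans (ler_norm_sum _ _ _) _; apply: ler_sum => i _.
  by rewrite normrM (ger0_norm (A_ge0 i j)) mxE.
have sum_eq0 : \sum_j ((u *m A) 0 j - u 0 j) = 0.
  rewrite sumrB; under eq_bigr do rewrite mxE.
  by rewrite exchange_big /=; under eq_bigr do rewrite -mulr_sumr A_sum1 mulr1; rewrite subrr.
apply/matrixP => i j; rewrite (ord1 i); apply/eqP; rewrite -subr_eq0; apply/eqP.
by apply: (psumr_eq0P _ sum_eq0) => // k _; rewrite subr_ge0.
Qed.

Lemma stochastic_mx_stationary : (0 < n)%N ->
  exists u : 'rV[R]_n, [/\ forall j, 0 <= u 0 j, \sum_j u 0 j = 1 & u *m A = u].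
Proof.
move=> n_gt0; have [v v_neq0 vA] := stochastic_mx_fixed_row n_gt0.
set u := map_mx Num.norm v; have uA := stochastic_mx_fixed_norm vA.
have [j vj_neq0] : exists j, v 0 j != 0.
  apply/existsP; move: v_neq0; apply: contraNT => /existsPn v0.
  by apply/eqP/matrixP => i k; rewrite (ord1 i) mxE; apply/eqP/negPn/v0.
have Z_gt0 : 0 < \sum_k u 0 k.
  rewrite (bigD1 j) //=; apply: ltr_pwDl; first by rewrite mxE normr_gt0.
  by apply: sumr_ge0 => k _; rewrite mxE.
exists ((\sum_k u 0 k)^-1 *: u); split.
- by move=> k; rewrite !mxE mulr_ge0 // invr_ge0 ltW.
- by under eq_bigr do rewrite mxE; rewrite -mulr_sumr mulVf ?gt_eqF.
- by rewrite -scalemxAl uA.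
Qed.

End StochasticMatrix.

Section Stationary.
Variables (R : realType) (S Q : finType) (G : pfsa R S Q).

Lemma trans_ge0 q q' : 0 <= trans G q q'.
Proof. by apply: sumr_ge0 => s _; exact: tpi_ge0. Qed.

Lemma sum_trans q : \sum_q' trans G q q' = 1.
Proof.
rewrite (sum_fiber_Some (delta G q) xpredT (tpi G q)) -(tpi_sum1 G q).
rewrite [RHS](bigID (fun s => oapp xpredT false (delta G q s))) /= [X in _ = _ + X]big1 ?addr0 //.
by move=> s; case delta_qs: (delta G q s) => //= _; exact: tpi_eq0.
Qed.

Lemma exists_stationary (q0 : Q) : exists p, stationary G p.
Proof.
have sum_enum (F : Q -> R) : \sum_(i < #|Q|) F (enum_val i) = \sum_q F q.
  by rewrite (big_enum_val F).
pose A : 'M[R]_#|Q| := \matrix_(i, j) trans G (enum_val i) (enum_val j).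
have A_ge0 i j : 0 <= A i j by rewrite mxE trans_ge0.
have A_sum1 i : \sum_j A i j = 1.
  by under eq_bigr do rewrite mxE; rewrite sum_enum sum_trans.
have /card_gt0P card_gt0 : exists q, q \in Q by exists q0.
have [u [u_ge0 u_sum1 uA]] := stochastic_mx_stationary A_ge0 A_sum1 card_gt0.
exists (fun q => u 0 (enum_rank q)); split=> //; split.
  by rewrite -sum_enum; under eq_bigr do rewrite enum_valK.
move=> q'; rewrite -{2}uA mxE -sum_enum; apply: eq_bigr => i _.
by rewrite enum_valK mxE enum_rankK.
Qed.

End Stationary.

Section Quotient.
Variables (R : realType) (S Q : finType) (G : pfsa R S Q).

Definition qrep (q : Q) : Q := odflt q [pick r | `[< eq_mu G G q r >] ].

Lemma eq_mu_qrep q : eq_mu G G q (qrep q).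
Proof. by rewrite /qrep; case: pickP => [r /asboolP //|_]. Qed.

Lemma qrep_eq q q' : eq_mu G G q q' -> qrep q = qrep q'.
Proof.
move=> eq_qq'; rewrite /qrep (eq_pick (Q := fun r => `[< eq_mu G G q' r >])) => [|r].
  by case: pickP => [//|none]; have := none q'; rewrite (asboolT (fun w => erefl)).
apply/asboolP/asboolP => [eq_qr|eq_q'r]; first exact: eq_mu_trans (eq_mu_sym eq_qq') eq_qr.
exact: eq_mu_trans eq_qq' eq_q'r.
Qed.

Lemma qrep_idem q : qrep (qrep q) = qrep q.
Proof. exact/esym/qrep_eq/eq_mu_qrep. Qed.

Notation qstate := {q : Q | qrep q == q}.

Definition qclass (q : Q) : qstate := exist _ (qrep q) (introT eqP (qrep_idem q)).

Lemma qclass_val (c : qstate) : qclass (val c) = c.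
Proof. by apply: val_inj; apply/eqP; exact: (valP c). Qed.

Lemma qclass_eq q q' : eq_mu G G q q' -> qclass q = qclass q'.
Proof. by move=> eq_qq'; apply: val_inj; exact: qrep_eq. Qed.

Definition qtpi (c : qstate) s := tpi G (val c) s.
Definition qdelta (c : qstate) s := omap qclass (delta G (val c) s).

Lemma qtpi_ge0 c s : 0 <= qtpi c s.
Proof. exact: tpi_ge0. Qed.

Lemma qtpi_sum1 c : \sum_s qtpi c s = 1.
Proof. exact: tpi_sum1. Qed.

Lemma qdelta_def c s : (qdelta c s != None) = (0 < qtpi c s).
Proof. by rewrite /qdelta /qtpi -delta_def; case: (delta G (val c) s). Qed.

Lemma qdelta_qclass q s : qdelta (qclass q) s = omap qclass (delta G q s).
Proof.
rewrite /qdelta /=; case delta_qs: (delta G q s) => [r|] /=; last first.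
  by rewrite (eq_mu_delta_None (eq_mu_qrep q) delta_qs).
have [r' -> eq_rr'] := eq_mu_delta (eq_mu_qrep q) delta_qs.
by congr Some; apply/esym/qclass_eq.
Qed.

Lemma qtpi_qclass q s : qtpi (qclass q) s = tpi G q s.
Proof. exact/eq_mu_tpi/eq_mu_qrep. Qed.

Lemma qconnect (c c' : qstate) : connect (fun a b => [exists s, qdelta a s == Some b]) c c'.
Proof.
have /connectP [qs qs_path qs_last] := strongly_connected G (val c) (val c').
rewrite -(qclass_val c) -(qclass_val c') {}qs_last.
elim: qs (val c) qs_path => [|q' qs IHqs] q /=; first by rewrite connect0.
case/andP => /existsP [s /eqP delta_qs] qs_path.
apply: connect_trans (IHqs _ qs_path); apply: connect1; apply/existsP; exists s.
by rewrite qdelta_qclass delta_qs.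
Qed.

Definition quotient_pfsa : pfsa R S qstate := Pfsa qtpi_ge0 qtpi_sum1 qdelta_def qconnect.

Lemma tpiw_quotient q x : tpiw quotient_pfsa (qclass q) x = tpiw G q x.
Proof.
elim: x q => [|s x IHx] q //=; rewrite (qdelta_qclass q s).
by case: (delta G q s) => [r|] //=; rewrite IHx qtpi_qclass.
Qed.

Lemma card_quotient_lt q q' : q != q' -> eq_mu G G q q' -> (#|{: qstate}| < #|Q|)%N.
Proof.
move=> neq_qq' eq_qq'; rewrite card_sig -(cardC [pred r | qrep r == r]) -ltn_subLR ?subnn //.
apply/card_gt0P; have : ~~ ((qrep q == q) && (qrep q' == q')).
  by apply: contra neq_qq' => /andP [/eqP <- /eqP <-]; rewrite (qrep_eq eq_qq').
by rewrite negb_and => /orP [?|?]; [exists q | exists q'].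
Qed.

Variable p : Q -> R.

Definition qdist (c : qstate) := \sum_(q | qclass q == c) p q.

Lemma sum_qclass (F : Q -> R) : \sum_(c : qstate) \sum_(q | qclass q == c) F q = \sum_q F q.
Proof. by rewrite (partition_big qclass xpredT). Qed.

Lemma trans_quotient q c' :
  trans quotient_pfsa (qclass q) c' = \sum_(q' | qclass q' == c') trans G q q'.
Proof.
rewrite /trans (sum_fiber_Some (delta G q) (fun q' => qclass q' == c')).
apply: eq_big => [s|s _]; last exact: qtpi_qclass.
by rewrite /= qdelta_qclass; case: (delta G q s).
Qed.

Lemma qdist_stationary : stationary G p -> stationary quotient_pfsa qdist.
Proof.
case=> p_ge0 [p_sum1 p_stat]; split; first by move=> c; exact: sumr_ge0.
split; first by rewrite sum_qclass.
move=> c'; under eq_bigr do rewrite mulr_suml.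
rewrite (eq_bigr (fun c => \sum_(q | qclass q == c) p q * trans quotient_pfsa (qclass q) c'));
  last by move=> c _; apply: eq_bigr => q /eqP ->.
rewrite sum_qclass; under eq_bigr do rewrite trans_quotient mulr_sumr.
by rewrite exchange_big /=; apply: eq_bigr => q' _; exact: p_stat.
Qed.

Lemma word_prob_quotient x : word_prob quotient_pfsa qdist x = word_prob G p x.
Proof.
rewrite /word_prob -sum_qclass; apply: eq_bigr => c _; rewrite mulr_suml.
by apply: eq_bigr => q /eqP <-; rewrite tpiw_quotient.
Qed.

End Quotient.

Section Irreducible.
Variables (R : realType) (S : finType).

Lemma same_process_sym (Q1 Q2 : finType) (G1 : pfsa R S Q1) (G2 : pfsa R S Q2) :
  same_process G1 G2 -> same_process G2 G1.
Proof. by case=> p1 [p2 [stat1 stat2 same]]; exists p2, p1; split=> // x. Qed.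

Lemma irreducibleP (Q : finType) (G : pfsa R S Q) :
  irreducible G <-> (forall q q' : Q, equiv_states G q q' -> q = q').
Proof.
split=> [irr q q' equiv_qq'|distinct [Q' [H [card_lt same]]]].
  apply: contrapT => /eqP neq_qq'; apply: irr; have [p p_stat] := exists_stationary G q.
  exists _, (quotient_pfsa G); split; first exact: card_quotient_lt neq_qq' equiv_qq'.
  by exists p, (qdist p); split; [|exact: qdist_stationary|move=> x; rewrite word_prob_quotient].
have [f f_eq] := same_process_eq_mu same.
have f_inj : injective f.
  by move=> q q' fq_fq'; apply: distinct => w; rewrite f_eq fq_fq' -f_eq.
by move: card_lt; rewrite ltnNge (leq_card f f_inj).
Qed.

Lemma omap_delta_eq_mu (Q1 Q2 : finType) (G1 : pfsa R S Q1) (G2 : pfsa R S Q2)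
    (f : Q1 -> Q2) q s :
  (forall q, eq_mu G1 G2 q (f q)) -> (forall h h' : Q2, equiv_states G2 h h' -> h = h') ->
  omap f (delta G1 q s) = delta G2 (f q) s.
Proof.
move=> f_eq distinct2; case delta_qs: (delta G1 q s) => [r|] /=; last first.
  by rewrite (eq_mu_delta_None (f_eq q) delta_qs).
have [r' -> eq_rr'] := eq_mu_delta (f_eq q) delta_qs.
by congr Some; apply: distinct2; exact: eq_mu_trans (eq_mu_sym (f_eq r)) eq_rr'.
Qed.

End Irreducible.

Theorem mainTheorem6 (R : realType) (S : finType) :
  (forall (Q : finType) (G : pfsa R S Q),
     irreducible G <-> (forall q q' : Q, equiv_states G q q' -> q = q')) /\
  (forall (Q1 Q2 : finType) (G1 : pfsa R S Q1) (G2 : pfsa R S Q2),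
     irreducible G1 -> irreducible G2 -> same_process G1 G2 ->
     exists f : Q1 -> Q2, bijective f /\
       (forall (q : Q1) (s : S),
          omap f (delta G1 q s) = delta G2 (f q) s /\ tpi G2 (f q) s = tpi G1 q s)).
Proof.
split=> [Q G|Q1 Q2 G1 G2 /irreducibleP distinct1 /irreducibleP distinct2 same].
  exact: irreducibleP.
have [f f_eq] := same_process_eq_mu same.
have [g g_eq] := same_process_eq_mu (same_process_sym same).
exists f; split.
  exists g => [q|h]; apply/esym; [apply: distinct1 | apply: distinct2].
    exact: eq_mu_trans (f_eq q) (g_eq (f q)).
  exact: eq_mu_trans (g_eq h) (f_eq (g h)).
by move=> q s; split; [exact: omap_delta_eq_mu | exact: eq_mu_tpi].
Qed.
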